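(* Every non-commutative BCK-algebra $\mathcal A$ of order $n$ satisfies $\operatorname{cd}(\mathcal A)\le\frac{n^2-2}{n^2}$, and for each $n\ge3$ this bound is attained: the algebra $\mathcal B_n$ defined by $\mathcal B_3=\mathcal{PI}$ and $\mathcal B_n=\mathcal B_{n-1}\sqcup\mathbf 2$ for $n>3$ is a non-commutative BCK-algebra of order $n$ with $\operatorname{cd}(\mathcal B_n)=\frac{n^2-2}{n^2}$. Consequently the equation $x\wedge y=y\wedge x$ has no finite satisfiability gap among BCK-algebras.
   Context: A BCK-algebra is a set $A$ with a binary operation $\cdot$ and a constant $0$ such that for all $x,y,z\in A$: (BCK1) $((x\cdot y)\cdot(x\cdot z))\cdot(z\cdot y)=0$; (BCK2) $(x\cdot(x\cdot y))\cdot y=0$; (BCK3) $x\cdot x=0$; (BCK4) $0\cdot x=0$; (BCK5) $x\cdot y=0$ and $y\cdot x=0$ imply $x=y$. Define $x\wedge y:=y\cdot(y\cdot x)$; the algebra is commutative if $x\wedge y=y\wedge x$ for all $x,y$. For finite $\mathcal A$, $\operatorname{cd}(\mathcal A)=|\{(x,y)\in A^2:x\wedge y=y\wedge x\}|/|A|^2$. $\mathcal{PI}$ is the BCK-algebra on $\{0,1,2\}$ with $1\cdot0=1$, $2\cdot0=2$, $2\cdot1=2$ and all other products $0$. $\mathbf 2$ is a two-element BCK-algebra $\{0,b\}$ with $b\cdot0=b$ and other products $0$, where $b$ is a new element. For BCK-algebras $\mathcal A,\mathcal B$ with $A\cap B=\{0\}$, the BCK-union $\mathcal A\sqcup\mathcal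 B$ has carrier $A\cup B$, with $x\cdot y$ computed in $\mathcal A$ if $x,y\in A$, in $\mathcal B$ if $x,y\in B$, and $x\cdot y=x$ otherwise. An equation has no finite satisfiability gap in a class if for every $\epsilon>0$ some finite member has degree of satisfiability strictly between $1-\epsilon$ and $1$. *)

From mathcomp Require Import all_boot all_order all_algebra.
Set Implicit Arguments. Unset Strict Implicit. Unset Printing Implicit Defensive.
Import Order.TTheory GRing.Theory Num.Theory.

Definition is_BCK (T : eqType) (op : T -> T -> T) (z : T) : Prop :=
  [/\ (forall x y w, op (op (op x y) (op x w)) (op w y) = z),
      (forall x y, op (op x (op x y)) y = z),
      (forall x, op x x = z),
      (forall x, op z x = z)
    & (forall x y, op x y = z -> op y x = z -> x = y)].

Definition bmeet (T : Type) (op : T -> T -> T) (x y : T) : T := op y (op y x).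

Definition bck_commutative (T : Type) (op : T -> T -> T) : Prop :=
  forall x y, bmeet op x y = bmeet op y x.

Definition cd (T : finType) (op : T -> T -> T) : rat :=
  (#|[set p : T * T | bmeet op p.1 p.2 == bmeet op p.2 p.1]|%:R / (#|T| ^ 2)%:R)%R.

(* Concrete algebras on carriers that are initial segments of nat, 0 = 0. *)
Definition PIop (x y : nat) : nat :=
  if (x == 1) && (y == 0) then 1
  else if (x == 2) && (y == 0) then 2
  else if (x == 2) && (y == 1) then 2
  else 0.

Definition two_op (b : nat) (x y : nat) : nat :=
  if (x == b) && (y == 0) then b else 0.

(* BCK-union of an algebra with carrier {0,...,m-1} and the algebra 2 = {0,m} *)
Definition bck_union_two (opA : nat -> nat -> nat) (m : nat) (x y : nat) : nat :=
  if (x < m) && (y < m) then opA x y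
  else if ((x == 0) || (x == m)) && ((y == 0) || (y == m)) then two_op m x y
  else x.

(* B_n on {0,...,n-1}: B_3 = PI, B_n = B_(n-1) ⊔ 2 (new element n-1) for n > 3.
   (values for n < 3 are irrelevant) *)
Fixpoint Bop (n : nat) : nat -> nat -> nat :=
  match n with
  | 0 | 1 | 2 | 3 => PIop
  | n'.+1 => bck_union_two (Bop n') n'
  end.

(* B_(m+1) as an operation on 'I_(m+1) (inord only clips out-of-range values,
   which do not occur since B_n is closed on {0..n-1}) *)
Definition B_op (m : nat) (x y : 'I_m.+1) : 'I_m.+1 := inord (Bop m.+1 x y).

From mathcomp Require Import all_boot all_order all_algebra.
From mathcomp Require Import zify lra.
From Stdlib Require Import FunctionalExtensionality.
Import Order.TTheory GRing.Theory Num.Theory.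
Set Implicit Arguments. Unset Strict Implicit.

(* A non-commuting pair (x, y) forces (y, x) to be non-commuting as well, so at
   least two of the n^2 pairs are missing from the commuting ones.  The bound is
   met by the BCK-algebra induced by the partial order on {0, ..., n-1} in which
   0 is the bottom and 1 < 2 is the only other strict relation: there
   x /\ y = y if y <= x and 0 otherwise, which is symmetric except on the pairs
   (1, 2) and (2, 1).  Letting n grow closes the gap. *)

Section CommutingPairs.
Variables (T : finType) (op : T -> T -> T).

Definition commuting_pairs : {set T * T} :=
  [set p | bmeet op p.1 p.2 == bmeet op p.2 p.1].

Lemma cdE : cd op = (#|commuting_pairs|%:R / (#|T| ^ 2)%:R)%R.
Proof. by []. Qed.

Lemma card_setC_swap (x y : T) : x != y ->
  (#|~: [set (x, y); (y, x)]|%:R = (#|T| ^ 2)%:R - 2 :> rat)%R.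
Proof.
move=> neq_xy; have := cardsC [set (x, y); (y, x)].
rewrite cards2 xpair_eqE negb_and neq_xy card_prod mulnn => <-.
by rewrite natrD addrAC subrr add0r.
Qed.

Lemma cd_le_noncommutative : ~ bck_commutative op ->
  (cd op <= ((#|T| ^ 2)%:R - 2) / (#|T| ^ 2)%:R)%R.
Proof.
move=> noncomm.
have : ~~ [forall x, forall y, bmeet op x y == bmeet op y x].
  apply/negP => /forallP all_comm; apply: noncomm => x y.
  by apply/eqP; exact: (forallP (all_comm x) y).
case/forallPn => x /forallPn[y neq_meet].
have neq_xy : x != y by apply: contraNneq neq_meet => ->.
have sub : commuting_pairs \subset ~: [set (x, y); (y, x)].
  apply/subsetP => -[a b]; rewrite !inE => /eqP comm_ab.
  by apply/negP => /orP[] /eqP[ea eb]; move: neq_meet; rewrite -ea -eb comm_ab eqxx.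
rewrite cdE -(card_setC_swap neq_xy) ler_wpM2r ?invr_ge0 ?ler0n //.
by rewrite ler_nat subset_leq_card.
Qed.

End CommutingPairs.

Section OrderBCK.
Variables (T : eqType) (le : rel T) (z : T).
Hypotheses (le_refl : reflexive le) (le_trans : transitive le)
  (le_anti : antisymmetric le) (le0x : forall x, le z x).

Definition order_bck (x y : T) : T := if le x y then z else x.

Lemma le_x0 x : le x z -> x = z.
Proof. by move=> lex0; apply: le_anti; rewrite lex0 le0x. Qed.

Lemma order_bck_x0 x : order_bck x z = x.
Proof. by rewrite /order_bck; case: ifP => // /le_x0 ->. Qed.

Lemma order_bck_xx x : order_bck x x = z.
Proof. by rewrite /order_bck le_refl. Qed.

Lemma order_bck_0x x : order_bck z x = z.
Proof. by rewrite /order_bck le0x. Qed.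

Lemma order_bck_is_BCK : is_BCK order_bck z.
Proof.
split.
- move=> x y w; case: (boolP (le x y)) => [le_xy|nle_xy].
    by rewrite [order_bck x y]/order_bck le_xy !order_bck_0x.
  rewrite [order_bck x y]/order_bck (negbTE nle_xy).
  case: (boolP (le x w)) => [le_xw|nle_xw]; last first.
    by rewrite [order_bck x w]/order_bck (negbTE nle_xw) order_bck_xx order_bck_0x.
  have nle_wy : le w y = false by apply: contraNF nle_xy; apply: le_trans.
  have nle_x0 : le x z = false by apply: contraNF nle_xy => /le_x0 ->.
  by rewrite /order_bck nle_wy le_xw nle_x0 le_xw.
- move=> x y; rewrite [order_bck x y]/order_bck; case: ifP => le_xy.
  + by rewrite order_bck_x0 /order_bck le_xy.
  + by rewrite order_bck_xx order_bck_0x.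
- exact: order_bck_xx.
- exact: order_bck_0x.
- move=> x y; rewrite /order_bck; case: ifP => le_xy; case: ifP => le_yx.
  + by move=> _ _; apply: le_anti; rewrite le_xy le_yx.
  + by move=> _ ey; rewrite ey le0x in le_yx.
  + by move=> ex _; rewrite ex le0x in le_xy.
  + by move=> ex _; rewrite ex le0x in le_xy.
Qed.

Lemma bmeet_order_bck x y : bmeet order_bck x y = if le y x then y else z.
Proof.
rewrite /bmeet {2}/order_bck; case: ifP => _; first by rewrite order_bck_x0.
by rewrite /order_bck le_refl.
Qed.

End OrderBCK.

Definition B_le (a b : nat) : bool := [|| a == b, a == 0 | (a == 1) && (b == 2)].

Lemma Bop_order n x y : 3 <= n -> x < n -> y < n ->
  Bop n x y = if B_le x y then 0 else x.
Proof.
elim: n x y => [//|n IHn] x y; rewrite leq_eqVlt => /orP[/eqP <- | n_ge3].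
  by case: x => [|[|[|x]]]; case: y => [|[|[|y]]].
have -> : Bop n.+1 = bck_union_two (Bop n) n by case: n n_ge3 {IHn}=> [|[|[|n]]].
move=> ltx lty; rewrite /bck_union_two /two_op /B_le.
case: ifP => [/andP[x_lt y_lt] | not_lt]; first by rewrite IHn.
repeat case: ifP => ?; lia.
Qed.

Section AlgebraB.
Variable m : nat.
Hypothesis order_ge3 : 3 <= m.+1.

Definition B_ord_le (x y : 'I_m.+1) : bool := B_le x y.

Lemma B_op_order_bck : @B_op m = order_bck B_ord_le ord0.
Proof.
apply: functional_extensionality => x; apply: functional_extensionality => y.
rewrite /B_op /order_bck /B_ord_le Bop_order //.
by case: ifP => _; [apply: val_inj; rewrite /= inordK | rewrite inord_val].
Qed.

Lemma B_ord_le_refl : reflexive B_ord_le.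
Proof. by move=> x; rewrite /B_ord_le /B_le eqxx. Qed.

Lemma B_ord_le_trans : transitive B_ord_le.
Proof. by move=> y x w; rewrite /B_ord_le /B_le; lia. Qed.

Lemma B_ord_le_anti : antisymmetric B_ord_le.
Proof.
by move=> x y /andP[]; rewrite /B_ord_le /B_le => ? ?; apply: val_inj => /=; lia.
Qed.

Lemma B_ord_le0 x : B_ord_le ord0 x.
Proof. by rewrite /B_ord_le /B_le /= orbT. Qed.

Lemma B_op_is_BCK : is_BCK (@B_op m) ord0.
Proof.
rewrite B_op_order_bck.
exact: order_bck_is_BCK B_ord_le_refl B_ord_le_trans B_ord_le_anti B_ord_le0.
Qed.

Let i1 : 'I_m.+1 := inord 1.
Let i2 : 'I_m.+1 := inord 2.

Lemma commuting_pairs_B_op :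
  commuting_pairs (@B_op m) = ~: [set (i1, i2); (i2, i1)].
Proof.
apply/setP => -[x y].
rewrite !inE B_op_order_bck !(bmeet_order_bck B_ord_le_refl B_ord_le_anti B_ord_le0).
rewrite -val_eqE !(fun_if val) !xpair_eqE -!val_eqE /= !inordK ?(ltnW order_ge3) //.
by rewrite /B_ord_le /B_le; do 2!case: ifP; lia.
Qed.

Lemma i1_neq_i2 : i1 != i2.
Proof. by rewrite -val_eqE /= !inordK ?(ltnW order_ge3). Qed.

Lemma B_op_noncommutative : ~ bck_commutative (@B_op m).
Proof.
move=> comm; have := comm i1 i2; apply/eqP.
have : (i1, i2) \notin commuting_pairs (@B_op m).
  by rewrite commuting_pairs_B_op !inE eqxx.
by rewrite inE.
Qed.

Lemma cd_B_op : cd (@B_op m) = (((m.+1 ^ 2)%:R - 2) / (m.+1 ^ 2)%:R)%R.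
Proof. by rewrite cdE commuting_pairs_B_op card_setC_swap ?i1_neq_i2 // card_ord. Qed.

End AlgebraB.

Lemma ratio_sub2_near_one (N : nat) (eps : rat) :
  (0 < eps)%R -> (2 / eps < N%:R)%R ->
  (1 - eps < (N%:R - 2) / N%:R < (1 : rat))%R.
Proof.
move=> eps_gt0 N_gt; have N_gt0 : (0 < N%:R :> rat)%R.
  by apply: le_lt_trans N_gt; rewrite divr_ge0 // ltW.
have Neps_gt2 : (2 < N%:R * eps)%R by rewrite -ltr_pdivrMr.
by rewrite ltr_pdivlMr // ltr_pdivrMr // mulrBl !mul1r; apply/andP; split; lra.
Qed.

Theorem theorem5p3 :
  (forall (T : finType) (op : T -> T -> T) (z : T),
      is_BCK op z -> ~ bck_commutative op ->
      (cd op <= ((#|T| ^ 2)%:R - 2) / (#|T| ^ 2)%:R)%R)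
  /\
  (forall m : nat, 3 <= m.+1 ->
      is_BCK (@B_op m) ord0 /\ ~ bck_commutative (@B_op m) /\
      #|'I_m.+1| = m.+1 /\
      cd (@B_op m) = (((m.+1 ^ 2)%:R - 2) / (m.+1 ^ 2)%:R)%R)
  /\
  (forall eps : rat, (0 < eps)%R ->
      exists (T : finType) (op : T -> T -> T) (z : T),
        is_BCK op z /\ (1 - eps < cd op)%R /\ (cd op < 1)%R).
Proof.
split; first by move=> T op z _; apply: cd_le_noncommutative.
split.
  move=> m order_ge3; split; first exact: B_op_is_BCK.
  by split; [exact: B_op_noncommutative | split; [exact: card_ord | exact: cd_B_op]].
move=> eps eps_gt0; pose k := Num.Def.archi_bound (2 / eps).
have k_gt : (2 / eps < k%:R)%R by apply: archi_boundP; rewrite divr_ge0 // ltW.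
exists 'I_k.+3, (@B_op k.+2), ord0; split; first exact: B_op_is_BCK.
have k_le : (k%:R <= (k.+3 ^ 2)%:R :> rat)%R by rewrite ler_nat; lia.
have /andP[lo hi] := ratio_sub2_near_one eps_gt0 (lt_le_trans k_gt k_le).
by rewrite cd_B_op.
Qed.
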